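(* Let $\mathcal{X}$ be a finite set, let $d\geq 1$, let $H:\mathcal{X}^{d+1}\to\mathbb{R}$ be any function and let $r\in\mathcal{P}_+(\mathcal{X})$. Then there exist functions $\kappa:\mathcal{X}^d\to\mathbb{R}$ and $\delta:\mathcal{X}\to\mathbb{R}$ such that the function \[ w(x_{d+1}|x_{1:d}) = \exp\bigl(H(x_{1:(d+1)})+\kappa(x_{2:(d+1)})-\kappa(x_{1:d})-\delta(x_{d+1})\bigr),\qquad x_{1:(d+1)}\in\mathcal{X}^{d+1}, \] belongs to $\mathcal{W}_d$ and its first-order stationary distribution satisfies $p_w^{(1)}(x_1)=r(x_1)$ for all $x_1\in\mathcal{X}$.
   Context: $\mathcal{P}_+(\mathcal{X})$ denotes the set of strictly positive probability distributions on the finite set $\mathcal{X}$. For $s\le t$, $x_{s:t}$ abbreviates $(x_s,\ldots,x_t)$. A $d$-th-order Markov kernel is a function $w:\mathcal{X}^{d+1}\to[0,\infty)$, written $w(y|x_{1:d})$, with $\sum_{y\in\mathcal{X}}w(y|x_{1:d})=1$ for every $x_{1:d}\in\mathcal{X}^d$; $\mathcal{W}_d$ is the set of strictly positive $d$-th-order Markov kernels. For $w\in\mathcal{W}_d$, its stationary distribution $p_w^{(d)}$ is the unique probability distribution on $\mathcal{X}^d$ satisfying $\sum_{x_1\in\mathcal{X}}p_w^{(d)}(x_{1:d})\,w(x_{d+1}|x_{1:d})=p_w^{(d)}(x_{2:(d+1)})$ for all $x_{2:(d+1)}\in\mathcal{X}^d$ (equivalently, the stationary distribution of the first-order chain on $\mathcal{X}^d$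 moving from $x_{1:d}$ to $x_{2:(d+1)}$ with probability $w(x_{d+1}|x_{1:d})$). The first-order stationary distribution is $p_w^{(1)}(x_1)=\sum_{x_{2:d}}p_w^{(d)}(x_{1:d})$. *)

From mathcomp Require Import all_boot all_order all_algebra.
From mathcomp Require Import all_classical all_reals all_analysis.
Set Implicit Arguments. Unset Strict Implicit. Unset Printing Implicit Defensive.
Import Order.TTheory GRing.Theory Num.Theory.
Local Open Scope ring_scope.

(* Elements of X^d are finite functions 'I_d -> X, i.e. (x_1,...,x_d). *)

Definition init_t (X : finType) (d : nat) (t : {ffun 'I_d.+1 -> X}) : {ffun 'I_d -> X} :=
  [ffun i => t (widen_ord (leqnSn d) i)].

Definition tail_t (X : finType) (d : nat) (t : {ffun 'I_d.+1 -> X}) : {ffun 'I_d -> X} :=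
  [ffun i => t (lift ord0 i)].

Definition snoc (X : finType) (d : nat) (s : {ffun 'I_d -> X}) (y : X) : {ffun 'I_d.+1 -> X} :=
  [ffun i : 'I_d.+1 => if unlift ord_max i is Some j then s j else y].

Definition is_pos_dist (R : realType) (X : finType) (r : X -> R) : Prop :=
  (forall x, 0 < r x) /\ \sum_(x : X) r x = 1.

(* w ∈ W_d : strictly positive d-th order Markov kernel, w s y = w(y | s) *)
Definition in_Wd (R : realType) (X : finType) (d : nat)
  (w : {ffun 'I_d -> X} -> X -> R) : Prop :=
  (forall s y, 0 < w s y) /\ (forall s, \sum_(y : X) w s y = 1).

Definition is_stationary (R : realType) (X : finType) (d : nat)
  (w : {ffun 'I_d -> X} -> X -> R) (p : {ffun 'I_d -> X} -> R) : Prop :=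
  [/\ (forall s, 0 <= p s), \sum_(s : {ffun 'I_d -> X}) p s = 1 &
      forall z : {ffun 'I_d -> X},
        \sum_(t : {ffun 'I_d.+1 -> X} | tail_t t == z) p (init_t t) * w (init_t t) (t ord_max)
        = p z].

Definition first_marginal (R : realType) (X : finType) (d : nat) (hd : (0 < d)%N)
  (p : {ffun 'I_d -> X} -> R) (x1 : X) : R :=
  \sum_(s : {ffun 'I_d -> X} | s (Ordinal hd) == x1) p s.

(* Maximize, over nonnegative [q] on [X^(d+1)] whose two [d]-dimensional
   marginals agree and whose last-letter marginal is [r], the concave functional
   [sum q H + sum q ln (P / q)], where [P] is the marginal of [q] on the first
   [d] letters. Since [x ln x] has infinite slope at [0], the maximizer [q] is
   positive, so the first-order condition says that [H - ln q + ln P] is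
   orthogonal to every balanced [v] with zero last-letter marginal. Such
   functions have the form [kappa(x_{1:d}) - kappa(x_{2:(d+1)}) + delta(x_{d+1})],
   so [w = q / P] is of the required form. [P] is stationary for [w], and as
   [w > 0] every word leads to every other in [d] steps, so [P] is the only
   stationary distribution; its first marginal is the last-letter marginal [r]
   of [q] by shift invariance. *)

From mathcomp Require Import all_boot all_order all_algebra.
From mathcomp Require Import all_classical all_reals all_analysis.
From mathcomp Require Import ring lra.
Import Order.TTheory GRing.Theory Num.Theory numFieldNormedType.Exports.
Set Implicit Arguments. Unset Strict Implicit. Unset Printing Implicit Defensive.
Local Open Scope classical_set_scope.
Local Open Scope ring_scope.

Section Words.
Variables (X : finType) (d : nat).
Local Notation S := {ffun 'I_d -> X}.
Local Notation T := {ffun 'I_d.+1 -> X}.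

Definition cons_t (x : X) (u : S) : T :=
  [ffun i : 'I_d.+1 => if unlift ord0 i is Some j then u j else x].

Lemma snoc_ord_max (s : S) y : snoc s y ord_max = y.
Proof. by rewrite ffunE unlift_none. Qed.

Lemma init_snoc (s : S) y : init_t (snoc s y) = s.
Proof.
apply/ffunP => i; rewrite !ffunE; case: unliftP => [j /(congr1 val) /= Ei|/(congr1 val) /= Ei].
  by congr (s _); apply/val_inj; move: Ei; rewrite /bump leqNgt ltn_ord.
by move: (ltn_ord i); rewrite Ei ltnn.
Qed.

Lemma snoc_init (t : T) : snoc (init_t t) (t ord_max) = t.
Proof.
apply/ffunP => i; rewrite ffunE; case: unliftP => [j ->|->] //.
by rewrite ffunE; congr (t _); apply/val_inj; rewrite /= /bump leqNgt ltn_ord.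
Qed.

Lemma cons_t_ord0 x (u : S) : cons_t x u ord0 = x.
Proof. by rewrite ffunE unlift_none. Qed.

Lemma tail_cons_t x (u : S) : tail_t (cons_t x u) = u.
Proof. by apply/ffunP => i; rewrite !ffunE liftK. Qed.

Lemma cons_t_tail (t : T) : cons_t (t ord0) (tail_t t) = t.
Proof. by apply/ffunP => i; rewrite ffunE; case: unliftP => [j ->|->] //; rewrite ffunE. Qed.

Variable R : nmodType.

Lemma big_init_eq (u : S) (F : T -> R) :
  \sum_(t | init_t t == u) F t = \sum_y F (snoc u y).
Proof.
rewrite (reindex_onto (snoc u) (fun t : T => t ord_max)) => [|t /eqP <-].
  by apply: eq_bigl => y; rewrite init_snoc snoc_ord_max !eqxx.
by rewrite snoc_init.
Qed.

Lemma big_tail_eq (u : S) (F : T -> R) :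
  \sum_(t | tail_t t == u) F t = \sum_x F (cons_t x u).
Proof.
rewrite (reindex_onto (fun x => cons_t x u) (fun t : T => t ord0)) => [|t /eqP <-].
  by apply: eq_bigl => x; rewrite tail_cons_t cons_t_ord0 !eqxx.
by rewrite cons_t_tail.
Qed.

Lemma big_last_eq (x : X) (F : T -> R) :
  \sum_(t : T | t ord_max == x) F t = \sum_s F (snoc s x).
Proof.
rewrite (reindex_onto (fun s => snoc s x) (fun t : T => init_t t)) => [|t /eqP <-].
  by apply: eq_bigl => s; rewrite init_snoc snoc_ord_max !eqxx.
by rewrite snoc_init.
Qed.

Lemma partition_big_init (P : pred S) (F : T -> R) :
  \sum_(t | P (init_t t)) F t = \sum_(s | P s) \sum_(t | init_t t == s) F t.
Proof.
rewrite (partition_big (fun t => init_t t) P) //=.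
by apply: eq_bigr => s Ps; apply: eq_bigl => t; case: eqP => [->|]; rewrite ?Ps ?andbF.
Qed.

Lemma partition_big_tail (P : pred S) (F : T -> R) :
  \sum_(t | P (tail_t t)) F t = \sum_(s | P s) \sum_(t | tail_t t == s) F t.
Proof.
rewrite (partition_big (fun t => tail_t t) P) //=.
by apply: eq_bigr => s Ps; apply: eq_bigl => t; case: eqP => [->|]; rewrite ?Ps ?andbF.
Qed.

End Words.

Lemma sum_mul_init (R : pzSemiRingType) (X : finType) (d : nat)
    (F : {ffun 'I_d.+1 -> X} -> R) (g : {ffun 'I_d -> X} -> R) :
  \sum_t F t * g (init_t t) = \sum_s (\sum_(t | init_t t == s) F t) * g s.
Proof.
rewrite (partition_big (fun t => init_t t) predT) //=.
by apply: eq_bigr => s _; rewrite big_distrl; apply: eq_bigr => t /eqP ->.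
Qed.

Section Shift.
Variables (X : finType) (d : nat).
Local Notation S := {ffun 'I_d -> X}.
Local Notation T := {ffun 'I_d.+1 -> X}.

Lemma tail_snoc_seq (f : nat -> X) (u : S) :
  (forall i : 'I_d, u i = f i) -> forall i : 'I_d, tail_t (snoc u (f d)) i = f i.+1.
Proof.
move=> uf i; rewrite !ffunE; case: unliftP => [j /(congr1 val) /= Ej|/(congr1 val) /= Ej].
  by rewrite uf; congr f; move: Ej; rewrite /bump /= leqNgt ltn_ord /= add1n add0n => ->.
by move: Ej; rewrite /bump /= add1n => ->.
Qed.

(* Any word is reached from any other by [d] shifts: read the windows of [s0 ++ s]. *)
Lemma shift_closed_all (P : pred S) :
  (forall t : T, P (init_t t) -> P (tail_t t)) -> forall s0 s, P s0 -> P s.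
Proof.
move=> Pshift s0 s Ps0.
case: (pickP (@predT X)) => [x0 _|X0]; last first.
  by have -> : s = s0 by apply/ffunP => i; have := X0 (s i).
set w := [seq s0 i | i <- enum 'I_d] ++ [seq s i | i <- enum 'I_d].
set window := fun k : nat => [ffun i : 'I_d => nth x0 w (i + k)].
have size_s0 : size [seq s0 i | i <- enum 'I_d] = d by rewrite size_map size_enum_ord.
have window0 : window 0%N = s0.
  apply/ffunP => i; rewrite ffunE addn0 nth_cat size_s0 ltn_ord.
  by rewrite (nth_map i) ?size_enum_ord // nth_ord_enum.
have windowd : window d = s.
  apply/ffunP => i; rewrite ffunE nth_cat size_s0 ltnNge leq_addl /= addnK.
  by rewrite (nth_map i) ?size_enum_ord // nth_ord_enum.
have windowS k : tail_t (snoc (window k) (nth x0 w (d + k))) = window k.+1.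
  apply/ffunP => i; rewrite [RHS]ffunE -addSnnS.
  by rewrite (tail_snoc_seq (f := fun n => nth x0 w (n + k))) // => j; rewrite ffunE.
rewrite -windowd; elim: d => [|k IHk]; first by rewrite window0.
by rewrite -windowS; apply: Pshift; rewrite init_snoc.
Qed.

Definition shift (z : X) (u : S) : S := tail_t (snoc u z).

Lemma iter_shift_const (z : X) (s : S) : iter d (shift z) s = [ffun=> z].
Proof.
set w := [seq s i | i <- enum 'I_d] ++ nseq d z.
have size_s : size [seq s i | i <- enum 'I_d] = d by rewrite size_map size_enum_ord.
have iter_shift k : iter k (shift z) s = [ffun i : 'I_d => nth z w (i + k)].
  elim: k => [|k IHk] /=.
    apply/ffunP => i; rewrite ffunE addn0 nth_cat size_s ltn_ord.
    by rewrite (nth_map i) ?size_enum_ord // nth_ord_enum.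
  have w_last : z = nth z w (d + k).
    by rewrite nth_cat size_s ltnNge leq_addr /= nth_nseq if_same.
  apply/ffunP => i; rewrite IHk /shift {2}w_last [RHS]ffunE -addSnnS.
  by rewrite (tail_snoc_seq (f := fun n => nth z w (n + k))) // => j; rewrite ffunE.
apply/ffunP => i; rewrite iter_shift !ffunE nth_cat size_s ltnNge leq_addl /=.
by rewrite nth_nseq if_same.
Qed.

End Shift.

Section XlnX.
Variable R : realType.
Implicit Types x y a b : R.

Definition xlnx x : R := x * ln x.

(* [a * ln (b / a)] for [a, b > 0]; it is [0] at [a = 0] because [ln 0 = 0]. *)
Definition xln_div a b : R := a * ln b - xlnx a.

Lemma ln_le_subr1 y : 0 < y -> ln y <= y - 1.
Proof.
move=> y0; have : -1 < y - 1 by lra.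
by move/le_ln1Dx; rewrite addrC subrK.
Qed.

Lemma xlnx0 : xlnx 0 = 0. Proof. by rewrite /xlnx mul0r. Qed.

Lemma xln_div00 : xln_div 0 0 = 0.
Proof. by rewrite /xln_div xlnx0 mul0r subrr. Qed.

Lemma xln_divZ e a b : 0 < e -> 0 < a -> 0 < b -> xln_div (e * a) (e * b) = e * xln_div a b.
Proof. by move=> e0 a0 b0; rewrite /xln_div /xlnx !lnM ?posrE //; ring. Qed.

(* For [0 < y < 1], [- ln y = 2 ln (1 / sqrt y) <= 2 / sqrt y]. *)
Lemma norm_xlnx_le y :
  `|xlnx y| <= 2 * Num.sqrt ((y + `|y|) / 2) + ((y + `|y|) / 2) ^+ 2.
Proof.
have h0 : 0 <= 2 * Num.sqrt ((y + `|y|) / 2) by rewrite mulr_ge0 ?sqrtr_ge0.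
case: (lerP y 0) => y0.
  by rewrite /xlnx ln0 // mulr0 normr0 addr_ge0 ?sqr_ge0.
have -> : (y + `|y|) / 2 = y by rewrite gtr0_norm //; lra.
case: (lerP 1 y) => y1.
  rewrite ger0_norm; last by rewrite /xlnx mulr_ge0 ?ln_ge0 // ltW.
  rewrite /xlnx expr2 -[X in X <= _]add0r lerD // ler_pM2l //.
  by have := ln_le_subr1 y0; lra.
set s := Num.sqrt y.
have s0 : 0 < s by rewrite sqrtr_gt0.
have ys : y = s ^+ 2 by rewrite sqr_sqrtr // ltW.
have s1 : s < 1 by rewrite -(ltr_pXn2r (n := 2)) ?expr1n -?ys // ?nnegrE ltW.
rewrite -[X in X <= _]addr0 lerD ?sqr_ge0 //.
rewrite /xlnx ys lnXn // ler0_norm; last first.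
  by rewrite mulr_ge0_le0 ?sqr_ge0 // mulrn_wle0 // ln_le0 // ltW.
have lnV_le : - ln s <= s^-1.
  rewrite -lnV ?posrE //; have := @ln_le_subr1 s^-1; rewrite invr_gt0 => /(_ s0); lra.
have : 0 <= s ^+ 2 * (s^-1 + ln s) by rewrite mulr_ge0 ?sqr_ge0 //; lra.
rewrite mulrDr (_ : s ^+ 2 * s^-1 = s) ?mulrnAr; last by rewrite expr2 mulfK ?lt0r_neq0.
lra.
Qed.

Lemma xlnx_continuous : continuous xlnx.
Proof.
move=> x; case: (ltrP 0 x) => x0.
  by apply: continuousM; [exact: cvg_id | exact: continuous_ln].
set m := fun y : R => (y + `|y|) / 2.
set h := fun y : R => 2 * Num.sqrt (m y) + m y ^+ 2.
have hx : h x = 0 by rewrite /h /m ler0_norm // subrr mul0r sqrtr0 mulr0 expr0n add0r.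
have xlnx_x : xlnx x = 0 by rewrite /xlnx ln0 // mulr0.
have m_cont : continuous m.
  move=> y; apply: cvgM; last exact: cvg_cst.
  by apply: cvgD; [exact: cvg_id | apply: cvg_norm; exact: cvg_id].
have h_cvg : h @ x --> h x.
  apply: cvgD; first apply: cvgM; first exact: cvg_cst.
    by apply: (continuous_comp (m_cont x)); exact: sqrt_continuous.
  by apply: cvgM; exact: m_cont.
rewrite /continuous_at xlnx_x.
apply: (@squeeze_cvgr _ _ _ _ (fun y => - h y) h).
- by near=> y; have := norm_xlnx_le y; rewrite ler_norml -/m -/h.
- by have := cvgN h_cvg; rewrite hx oppr0; apply.
- by rewrite hx in h_cvg.
Unshelve. all: by end_near. Qed.

Lemma xlnx_tangent_le a x : 0 < a -> 0 <= x -> xlnx a + (ln a + 1) * (x - a) <= xlnx x.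
Proof.
move=> a0; rewrite le0r => /orP[/eqP->|x0]; first by rewrite xlnx0 /xlnx; lra.
have := ln_le_subr1 (divr_gt0 a0 x0).
rewrite lnM ?posrE ?invr_gt0 // lnV ?posrE // => ln_le.
have : x * (ln a - ln x) <= x * (a / x - 1) by rewrite ler_wpM2l // ?ltW.
by rewrite !mulrBr (mulrC x (a / x)) divfK ?lt0r_neq0 // /xlnx; lra.
Qed.

Lemma xlnx_sub_tangent_le a x : 0 < a -> 0 <= x ->
  xlnx x - xlnx a - (ln a + 1) * (x - a) <= (x - a) ^+ 2 / a.
Proof.
move=> a0; rewrite le0r => /orP[/eqP->|x0].
  rewrite (_ : (0 - a) ^+ 2 / a = a); last by field; rewrite lt0r_neq0.
  by rewrite xlnx0 /xlnx; lra.
have := ln_le_subr1 (divr_gt0 x0 a0).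
rewrite lnM ?posrE ?invr_gt0 // lnV ?posrE // => ln_le.
have : x * (ln x - ln a) <= x * (x / a - 1) by rewrite ler_wpM2l // ?ltW.
rewrite (_ : (x - a) ^+ 2 / a = x * (x / a) - 2 * x + a); last by field; rewrite lt0r_neq0.
by rewrite /xlnx !mulrBr; lra.
Qed.

Lemma xln_div_tangent_ge a0 b0 a b : 0 < a0 -> 0 < b0 -> 0 <= a -> 0 < b ->
  xln_div a b <= xln_div a0 b0 + (ln b0 - ln a0 - 1) * (a - a0) + (a0 / b0) * (b - b0).
Proof.
move=> a00 b00; rewrite le0r => /orP[/eqP->|a0p] b0p.
  have : 0 <= a0 / b0 * b by rewrite mulr_ge0 // ?divr_ge0 // ltW.
  have : a0 / b0 * b0 = a0 by rewrite divfK ?lt0r_neq0.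
  by rewrite /xln_div xlnx0 mul0r subrr /xlnx; lra.
set y := a0 * b / (b0 * a).
have y0 : 0 < y by rewrite /y divr_gt0 // mulr_gt0.
have ln_y : ln y = ln a0 + ln b - ln b0 - ln a.
  rewrite /y lnM ?posrE ?invr_gt0 ?mulr_gt0 // lnV ?posrE ?mulr_gt0 // !lnM ?posrE //.
  ring.
have : a * ln y <= a * (y - 1) by apply: ler_wpM2l; [exact: ltW | exact: ln_le_subr1].
have -> : a * (y - 1) = a0 / b0 * b - a by rewrite /y; field; rewrite !lt0r_neq0.
have : a0 / b0 * b0 = a0 by rewrite divfK ?lt0r_neq0.
by rewrite ln_y /xln_div /xlnx; lra.
Qed.

Lemma xln_div_concave l a b a' b' : 0 < l -> l < 1 -> 0 <= a -> 0 < b -> 0 < a' -> 0 < b' ->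
  (1 - l) * xln_div a b + l * xln_div a' b' <=
  xln_div ((1 - l) * a + l * a') ((1 - l) * b + l * b').
Proof.
move=> l0 l1 a0 b0 a'0 b'0.
have l1' : 0 <= 1 - l by rewrite subr_ge0 ltW.
set ma := (1 - l) * a + l * a'; set mb := (1 - l) * b + l * b'.
have ma0 : 0 < ma by rewrite ltr_wpDl ?mulr_ge0 ?mulr_gt0.
have mb0 : 0 < mb by rewrite ltr_wpDl ?mulr_ge0 ?mulr_gt0 // ltW.
have := ler_wpM2l l1' (xln_div_tangent_ge ma0 mb0 a0 b0).
have := ler_wpM2l (ltW l0) (xln_div_tangent_ge ma0 mb0 (ltW a'0) b'0).
set L := ln mb - ln ma - 1; set Q := ma / mb.
have : (1 - l) * (L * (a - ma)) + l * (L * (a' - ma)) = 0 by rewrite /ma; ring.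
have : (1 - l) * (Q * (b - mb)) + l * (Q * (b' - mb)) = 0 by rewrite /mb; ring.
lra.
Qed.

Lemma expRN1_le_half : expR (-1 : R) <= 2^-1.
Proof.
have : (2 : R) <= expR 1 by have := @expR_ge1Dx R 1; rewrite (_ : 1 + 1 = 2 :> R).
by rewrite expRN lef_pV2 ?posrE ?expR_gt0.
Qed.

End XlnX.

Lemma quadratic_bound_eq0 (R : realFieldType) (D K e0 : R) :
  0 < e0 -> (forall e, `|e| <= e0 -> e * D <= e ^+ 2 * K) -> D = 0.
Proof.
move=> e00 bound.
have small e : 0 < e -> e <= e0 -> `|D| <= e * `|K|.
  move=> e_gt0 e_le; have := bound e; have := bound (- e).
  rewrite normrN sqrrN gtr0_norm // => /(_ e_le) bN /(_ e_le) bP.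
  have : e * `|D| <= e * (e * `|K|).
    rewrite mulrA -expr2.
    have hK : e ^+ 2 * K <= e ^+ 2 * `|K| by rewrite ler_wpM2l ?sqr_ge0 ?ler_norm.
    by case: (lerP 0 D) => D0; [rewrite ger0_norm | rewrite ltr0_norm]; lra.
  by rewrite ler_pM2l.
apply/eqP; apply/negPn/negP => D0.
set e := Num.min e0 (`|D| / (`|K| + 1)).
have e_gt0 : 0 < e by rewrite lt_min e00 divr_gt0 ?normr_gt0 // ltr_wpDl.
have : e * `|K| < `|D|.
  apply: le_lt_trans (_ : `|D| / (`|K| + 1) * `|K| < `|D|).
    by rewrite ler_wpM2r // ge_min lexx orbT.
  rewrite mulrAC ltr_pdivrMr ?ltr_wpDl // ltr_pM2l ?normr_gt0 //; lra.
by rewrite ltNge small // ge_min lexx.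
Qed.

Lemma ler_term_sum (R : numDomainType) (I : finType) (P : pred I) (F : I -> R) i :
  P i -> (forall j, P j -> 0 <= F j) -> F i <= \sum_(j | P j) F j.
Proof.
move=> Pi F0; rewrite (bigD1 i) //= lerDl.
by apply: sumr_ge0 => j /andP[Pj _]; exact: F0.
Qed.

Lemma xln_div_le2 (R : realType) (a b b' : R) : 0 <= a -> 0 < b -> b <= b' ->
  xln_div a b <= xln_div a b'.
Proof.
move=> a0 b0 bb'; rewrite /xln_div lerD2r ler_wpM2l // ler_ln ?posrE //.
exact: lt_le_trans bb'.
Qed.

Lemma xln_div_mix_ge (R : realType) (e a b a' b' : R) :
  0 < e -> e < 1 -> 0 <= a -> a <= b -> 0 < a' -> 0 < b' ->
  (1 - e) * xln_div a b + e * xln_div a' b' <=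
  xln_div ((1 - e) * a + e * a') ((1 - e) * b + e * b').
Proof.
move=> e0 e1 a0 ab a'0 b'0; case: (ltrP 0 b) => [b0|]; first exact: xln_div_concave.
move=> b_le0; have b0 : b = 0 by apply/eqP; rewrite eq_le b_le0 (le_trans a0 ab).
have a_eq0 : a = 0 by apply/eqP; rewrite eq_le a0 -b0 ab.
by rewrite a_eq0 b0 xln_div00 !mulr0 !add0r xln_divZ.
Qed.

Section Marginals.
Variables (R : nmodType) (X : finType) (d : nat).
Local Notation S := {ffun 'I_d -> X}.
Local Notation T := {ffun 'I_d.+1 -> X}.
Implicit Types (q : T -> R).

Definition init_marg q (s : S) : R := \sum_(t | init_t t == s) q t.

Definition last_marg q (x : X) : R := \sum_(t : T | t ord_max == x) q t.

Definition shift_balanced q : Prop :=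
  forall s : S, init_marg q s = \sum_(t | tail_t t == s) q t.

Lemma sum_init_marg q : \sum_s init_marg q s = \sum_t q t.
Proof. by rewrite (partition_big (fun t : T => init_t t) predT). Qed.

Lemma first_last_marg q x : shift_balanced q ->
  \sum_(t : T | t ord0 == x) q t = last_marg q x.
Proof.
move=> q_bal.
set G := fun n : nat => \sum_(t : T | t (inord n) == x) q t.
have G0 : \sum_(t : T | t ord0 == x) q t = G 0%N.
  by apply: eq_bigl => t; rewrite (_ : inord 0 = ord0) //; apply/val_inj; rewrite /= inordK.
have Gd : last_marg q x = G d.
  by apply: eq_bigl => t; rewrite (_ : inord d = ord_max) //; apply/val_inj; rewrite /= inordK.
have GS n : (n < d)%N -> G n = G n.+1.
  move=> nd; set i := Ordinal nd.
  have -> : G n = \sum_(t | (fun s : S => s i == x) (init_t t)) q t.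
    apply: eq_bigl => t /=; rewrite ffunE; congr (t _ == x).
    by apply/val_inj; rewrite /= inordK // ltnW.
  have -> : G n.+1 = \sum_(t | (fun s : S => s i == x) (tail_t t)) q t.
    apply: eq_bigl => t /=; rewrite ffunE; congr (t _ == x).
    by apply/val_inj; rewrite /= inordK.
  rewrite (partition_big_init (fun s : S => s i == x)).
  rewrite (partition_big_tail (fun s : S => s i == x)).
  by apply: eq_bigr => s _; rewrite -q_bal.
suff G0n n : (n <= d)%N -> G 0%N = G n by rewrite G0 Gd (G0n d).
by elim: n => [|n IHn] nd //; rewrite (IHn (ltnW nd)) GS.
Qed.

End Marginals.

Section FreeEnergy.
Variables (R : realType) (X : finType) (d : nat).
Local Notation S := {ffun 'I_d -> X}.
Local Notation T := {ffun 'I_d.+1 -> X}.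
Implicit Types (q v : T -> R).

(* The expectation of [H] under [q] plus the conditional entropy of the last
   letter given the first [d] ones. *)
Definition free_energy (H : T -> R) q : R :=
  \sum_t q t * H t - \sum_t xlnx (q t) + \sum_s xlnx (init_marg q s).

Definition free_energy_grad (H : T -> R) q (t : T) : R :=
  H t - ln (q t) + ln (init_marg q (init_t t)).

Lemma init_marg_lin q1 q2 a b s :
  init_marg (fun t => a * q1 t + b * q2 t) s = a * init_marg q1 s + b * init_marg q2 s.
Proof. by rewrite /init_marg big_split /= -!mulr_sumr. Qed.

Lemma init_marg_ge0 q s : (forall t, 0 <= q t) -> 0 <= init_marg q s.
Proof. by move=> q0; apply: sumr_ge0. Qed.

Lemma le_init_marg q t : (forall t, 0 <= q t) -> q t <= init_marg q (init_t t).
Proof. by move=> q0; apply: ler_term_sum => // ? _; exact: q0. Qed.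

Lemma free_energyE H q :
  free_energy H q = \sum_t (q t * H t + xln_div (q t) (init_marg q (init_t t))).
Proof.
rewrite /free_energy big_split /= /xln_div sumrB.
rewrite (_ : \sum_s xlnx (init_marg q s) = \sum_t q t * ln (init_marg q (init_t t))).
  by lra.
by rewrite (sum_mul_init q (fun s => ln (init_marg q s))).
Qed.

(* Mixing in a positive [q'] gains [e q' t0 (ln (1/e) + O(1))] at a zero [q t0]
   with a positive marginal, because [xlnx] has infinite slope at [0]. *)
Lemma free_energy_mix_ge H q q' e t0 :
  (forall t, 0 <= q t) -> (forall t, 0 < q' t) -> (forall s, 0 < init_marg q' s) ->
  0 < e -> e <= 2^-1 -> q t0 = 0 -> 0 < init_marg q (init_t t0) ->
  (1 - e) * free_energy H q + e * free_energy H q' +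
    e * q' t0 * (ln (init_marg q (init_t t0) / 2) - ln (init_marg q' (init_t t0)) - ln e)
  <= free_energy H (fun t => (1 - e) * q t + e * q' t).
Proof.
move=> q0 q'0 P'0 e0 e_half qt0 Pt0.
set bonus := e * q' t0 * _.
have term t : (1 - e) * xln_div (q t) (init_marg q (init_t t)) +
      e * xln_div (q' t) (init_marg q' (init_t t)) + (if t == t0 then bonus else 0)
    <= xln_div ((1 - e) * q t + e * q' t)
         ((1 - e) * init_marg q (init_t t) + e * init_marg q' (init_t t)).
  case: eqVneq => [->|_]; last first.
    by rewrite addr0 xln_div_mix_ge ?le_init_marg //; lra.
  set B := init_marg q (init_t t0); set b' := init_marg q' (init_t t0).
  rewrite qt0 mulr0 add0r (_ : xln_div 0 B = 0) ?mulr0 ?add0r; last first.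
    by rewrite /xln_div xlnx0 mul0r subrr.
  have -> : e * xln_div (q' t0) b' + bonus = xln_div (e * q' t0) (B / 2).
    by rewrite /bonus /xln_div /xlnx (@lnM _ e (q' t0)) ?posrE //; ring.
  apply: xln_div_le2; first exact: mulr_ge0 (ltW e0) (ltW (q'0 t0)).
    by rewrite divr_gt0.
  have : 0 <= e * b' by exact: mulr_ge0 (ltW e0) (ltW (P'0 _)).
  have : B / 2 <= (1 - e) * B by rewrite mulrC; apply: ler_wpM2r; [exact: ltW | lra].
  lra.
have -> : bonus = \sum_t (if t == t0 then bonus else 0).
  by rewrite -big_mkcond big_pred1_eq.
rewrite !free_energyE.
rewrite !mulr_sumr -!big_split /=; apply: ler_sum => t _.
have := term t; rewrite init_marg_lin.
move: (if _ then _ else _) (xln_div ((1 - e) * _ + _) _) => bonus_t P1.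
move: (xln_div (q t) _) (xln_div (q' t) _) => P2 P3.
lra.
Qed.

(* Second-order expansion: [xlnx] is convex with curvature [1 / x]. *)
Lemma free_energy_perturb_ge H q v e :
  (forall t, 0 < q t) -> (forall s, 0 < init_marg q s) ->
  (forall t, 0 <= q t + e * v t) ->
  free_energy H q + e * \sum_t v t * free_energy_grad H q t - e ^+ 2 * \sum_t v t ^+ 2 / q t
  <= free_energy H (fun t => q t + e * v t).
Proof.
move=> q0 P0 qe0; set qe := fun t => q t + e * v t.
have energy : \sum_t qe t * H t = \sum_t q t * H t + e * \sum_t v t * H t.
  by rewrite /qe mulr_sumr -big_split /=; apply: eq_bigr => t _; ring.
have entropy : \sum_t xlnx (qe t) <= \sum_t xlnx (q t) +
    e * \sum_t (ln (q t) + 1) * v t + e ^+ 2 * \sum_t v t ^+ 2 / q t.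
  rewrite !mulr_sumr -!big_split /=; apply: ler_sum => t _.
  have := xlnx_sub_tangent_le (q0 t) (qe0 t).
  rewrite (_ : qe t - q t = e * v t) /qe; last by ring.
  by rewrite (_ : (e * v t) ^+ 2 / q t = e ^+ 2 * (v t ^+ 2 / q t)); [lra | ring].
have marg_entropy : \sum_s xlnx (init_marg q s) +
    e * \sum_t v t * (ln (init_marg q (init_t t)) + 1) <= \sum_s xlnx (init_marg qe s).
  rewrite (sum_mul_init v (fun s => ln (init_marg q s) + 1)) mulr_sumr -big_split /=.
  apply: ler_sum => s _.
  have := xlnx_tangent_le (P0 s) (init_marg_ge0 s qe0).
  by rewrite /init_marg big_split /= -mulr_sumr; lra.
have grad : \sum_t v t * free_energy_grad H q t = \sum_t v t * H t -
    \sum_t (ln (q t) + 1) * v t + \sum_t v t * (ln (init_marg q (init_t t)) + 1).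
  rewrite -sumrB -big_split /=; apply: eq_bigr => t _; rewrite /free_energy_grad; ring.
by rewrite /free_energy -/qe energy grad; lra.
Qed.

End FreeEnergy.

Section Closed.
Variables (R : realType) (V : topologicalType).
Implicit Types f g : V -> R.

Lemma continuous_sum (I : finType) (P : pred I) (F : I -> V -> R) :
  (forall i, continuous (F i)) -> continuous (fun v => \sum_(i | P i) F i v).
Proof. by move=> Fc; apply: continuous_big => [|i _]; [exact: add_continuous | exact: Fc]. Qed.

Lemma continuous_addr f g : continuous f -> continuous g -> continuous (fun v => f v + g v).
Proof. by move=> fc gc v; apply: continuousD; [exact: fc | exact: gc]. Qed.

Lemma continuous_subr f g : continuous f -> continuous g -> continuous (fun v => f v - g v).
Proof. by move=> fc gc v; apply: continuousB; [exact: fc | exact: gc]. Qed.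

Lemma closed_ge0_fun f : continuous f -> closed [set v | 0 <= f v].
Proof.
move=> fc; apply: (@preimage_closed _ _ f [set x : R | 0 <= x]); last exact: closed_ge.
by move=> v _; exact: fc.
Qed.

Lemma closed_eq_fun f g : continuous f -> continuous g -> closed [set v | f v = g v].
Proof.
move=> fc gc.
have -> : [set v | f v = g v] = (fun v => f v - g v) @^-1` [set x : R | x = 0].
  apply/funext => v; apply/propext; rewrite /preimage /=.
  by split => [->|/eqP]; [exact: subrr | rewrite subr_eq0 => /eqP].
apply: (@preimage_closed _ _ _ [set x : R | x = 0]); last exact: closed_eq.
by move=> v _; exact: continuous_subr.
Qed.

Lemma closed_forall (I : Type) (F : I -> set V) :
  (forall i, closed (F i)) -> closed [set v | forall i, F i v].
Proof.
move=> Fc; rewrite (_ : [set v | forall i, F i v] = \bigcap_(i in setT) F i).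
  by apply: closed_bigI => i _; exact: Fc.
by apply/seteqP; split => v /= Fv i //; apply: Fv.
Qed.

End Closed.

Section Maximizer.
Variables (R : realType) (X : finType) (d : nat).
Local Notation S := {ffun 'I_d -> X}.
Local Notation T := {ffun 'I_d.+1 -> X}.
Variables (H : T -> R) (r : X -> R).
Hypothesis r_dist : is_pos_dist r.
Implicit Types (q : T -> R) (v : 'rV[R]_#|T|).

Definition feasible q : Prop :=
  [/\ forall t, 0 <= q t, shift_balanced q & forall x, last_marg q x = r x].

Lemma pos_dist_witness : exists x : X, 0 < r x.
Proof.
case: r_dist => r_gt0 r_sum; case: (pickP (@predT X)) => [x _|X0]; first by exists x.
by move: r_sum; rewrite big_pred0 // => /eqP; rewrite eq_sym oner_eq0.
Qed.

Lemma feasible_sum1 q : feasible q -> \sum_t q t = 1.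
Proof.
case=> _ _ q_last; rewrite (partition_big (fun t : T => t ord_max) predT) //=.
by case: r_dist => _ <-; apply: eq_bigr => x _; rewrite -q_last.
Qed.

Lemma feasible_le1 q : feasible q -> forall t, q t <= 1.
Proof.
move=> q_feas t; rewrite -(feasible_sum1 q_feas).
by case: q_feas => q0 _ _; apply: ler_term_sum.
Qed.

Lemma feasible_mix q1 q2 a b : feasible q1 -> feasible q2 ->
  0 <= a -> 0 <= b -> a + b = 1 -> feasible (fun t => a * q1 t + b * q2 t).
Proof.
case=> q1_0 q1_bal q1_last [q2_0 q2_bal q2_last] a0 b0 ab; split.
- by move=> t; rewrite addr_ge0 // mulr_ge0.
- by move=> s; rewrite init_marg_lin big_split /= -!mulr_sumr q1_bal q2_bal.
- move=> x; rewrite /last_marg big_split /= -!mulr_sumr.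
  by rewrite -/(last_marg q1 x) -/(last_marg q2 x) q1_last q2_last -mulrDl ab mul1r.
Qed.

Definition prod_dist (t : T) : R := \prod_i r (t i).

Lemma prod_dist_gt0 t : 0 < prod_dist t.
Proof. by apply: prodr_gt0 => i _; case: r_dist. Qed.

Lemma sum_prod_dist : \sum_(s : S) \prod_i r (s i) = 1.
Proof.
rewrite -(bigA_distr_bigA (fun (i : 'I_d) (y : X) => r y)) /=.
by apply: big1 => i _; case: r_dist.
Qed.

Lemma prod_dist_snoc s y : prod_dist (snoc s y) = (\prod_i r (s i)) * r y.
Proof.
rewrite /prod_dist big_ord_recr /= snoc_ord_max; congr (_ * _).
apply: eq_bigr => i _.
by have := congr1 (fun u : S => u i) (init_snoc s y); rewrite ffunE => ->.
Qed.

Lemma prod_dist_cons x s : prod_dist (cons_t x s) = r x * \prod_i r (s i).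
Proof.
rewrite /prod_dist big_ord_recl /= cons_t_ord0; congr (_ * _).
apply: eq_bigr => i _.
by have := congr1 (fun u : S => u i) (tail_cons_t x s); rewrite ffunE => ->.
Qed.

Lemma prod_dist_feasible : feasible prod_dist.
Proof.
split.
- by move=> t; exact: ltW (prod_dist_gt0 t).
- move=> s; rewrite /init_marg big_init_eq big_tail_eq.
  under eq_bigr do rewrite prod_dist_snoc.
  under [RHS]eq_bigr do rewrite prod_dist_cons.
  by rewrite -mulr_sumr -mulr_suml mulrC.
- move=> x; rewrite /last_marg big_last_eq.
  under eq_bigr do rewrite prod_dist_snoc.
  by rewrite -mulr_suml sum_prod_dist mul1r.
Qed.

Lemma init_marg_pos q : (forall t, 0 < q t) -> forall s, 0 < init_marg q s.
Proof.
move=> q0 s; have [x _] := pos_dist_witness.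
apply: lt_le_trans (q0 (snoc s x)) _.
by rewrite -[in leRHS](init_snoc s x); apply: le_init_marg => t; exact: ltW.
Qed.

Definition of_row v : T -> R := fun t => v ord0 (enum_rank t).
Definition to_row q : 'rV[R]_#|T| := \row_i q (enum_val i).

Lemma to_rowK q : of_row (to_row q) = q.
Proof. by apply: funext => t; rewrite /of_row /to_row mxE enum_rankK. Qed.

Lemma continuous_of_row t : continuous (fun v => of_row v t).
Proof. exact: coord_continuous. Qed.

Lemma continuous_of_row_sum (P : pred T) : continuous (fun v => \sum_(t | P t) of_row v t).
Proof. by apply: continuous_sum => t; exact: continuous_of_row. Qed.

Lemma closed_feasible : closed [set v | feasible (of_row v)].
Proof.
rewrite (_ : [set v | _] = [set v | forall t, 0 <= of_row v t] `&`
    ([set v | forall s, init_marg (of_row v) s = \sum_(t | tail_t t == s) of_row v t]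
     `&` [set v | forall x, last_marg (of_row v) x = r x])).
  apply: closedI; first by apply: closed_forall => t; apply/closed_ge0_fun/continuous_of_row.
  apply: closedI; apply: closed_forall => i; apply: closed_eq_fun;
    by [exact: continuous_of_row_sum | exact: cst_continuous].
by apply/seteqP; split => v /=; [case=> ? ? ?|case=> ? []].
Qed.

Lemma exists_free_energy_max :
  exists2 qm, feasible qm & forall q, feasible q -> free_energy H q <= free_energy H qm.
Proof.
set A := [set v | feasible (of_row v)].
have A0 : A !=set0.
  by exists (to_row prod_dist); rewrite /A /= to_rowK; exact: prod_dist_feasible.
have A_compact : compact A.
  apply: (subclosed_compact closed_feasible
    (@rV_compact R #|T| (fun=> `[(0:R), 1]%classic) (fun _ => @segment_compact R 0 1))).
  move=> v Av i /=; rewrite in_itv /= -[i]enum_valK.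
  by case: Av (Av) => v0 _ _ /feasible_le1 v1; rewrite v0 v1.
have energy_cont : continuous (fun v => \sum_t of_row v t * H t).
  apply: continuous_sum => t.
  rewrite (_ : (fun v => _) = (fun v => of_row v t) \* (fun=> H t)) // => v.
  by apply: continuousM; [exact: continuous_of_row | exact: cst_continuous].
have entropy_cont : continuous (fun v => \sum_t xlnx (of_row v t)).
  apply: continuous_sum => t v.
  by apply: continuous_comp; [exact: continuous_of_row | exact: xlnx_continuous].
have marg_entropy_cont : continuous (fun v => \sum_s xlnx (init_marg (of_row v) s)).
  apply: continuous_sum => s v.
  by apply: continuous_comp; [exact: continuous_of_row_sum | exact: xlnx_continuous].
have J_cont : {within A, continuous (fun v => free_energy H (of_row v))}.
  apply: continuous_subspaceT; rewrite /free_energy.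
  by apply: continuous_addr; first apply: continuous_subr.
have [vm vm_A vm_max] := compact_EVT_max A0 A_compact J_cont.
exists (of_row vm); first by move: vm_A; rewrite inE.
by move=> q q_feas; rewrite -(to_rowK q); apply: vm_max; rewrite inE /A /= to_rowK.
Qed.

Section MaximizerProperties.
Variable qm : T -> R.
Hypothesis qm_feas : feasible qm.
Hypothesis qm_max : forall q, feasible q -> free_energy H q <= free_energy H qm.

Lemma free_energy_max_ge0 t : 0 <= qm t.
Proof. by case: qm_feas. Qed.

Lemma free_energy_max_gt0_at t0 : 0 < init_marg qm (init_t t0) -> 0 < qm t0.
Proof.
move=> B0; case: (ltrP 0 (qm t0)) => // qt0_le0; exfalso.
have qt0 : qm t0 = 0 by apply/eqP; rewrite eq_le qt0_le0 free_energy_max_ge0.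
set B := init_marg qm (init_t t0) in B0.
set a0 := prod_dist t0; have a00 : 0 < a0 := prod_dist_gt0 t0.
set K := ln (B / 2) - ln (init_marg prod_dist (init_t t0)).
set C := free_energy H prod_dist - free_energy H qm.
set M := 1 + `|K| + `|C| / a0.
have M1 : 1 <= M by rewrite /M -addrA lerDl addr_ge0 ?divr_ge0 // ltW.
set e := expR (- M); have e0 : 0 < e := expR_gt0 _.
have e_half : e <= 2^-1.
  by apply: le_trans (expRN1_le_half R); rewrite /e ler_expR lerN2.
have mix_feas : feasible (fun t => (1 - e) * qm t + e * prod_dist t).
  by apply: feasible_mix prod_dist_feasible _ _ _ => //; [lra | exact: ltW | ring].
have := free_energy_mix_ge H free_energy_max_ge0 prod_dist_gt0
  (init_marg_pos prod_dist_gt0) e0 e_half qt0 B0.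
have := qm_max mix_feas; rewrite -/B -/a0 /e expRK -/e -/K => le_max le_mix.
have : a0 * (1 + `|C| / a0) <= a0 * (K + M).
  by apply: ler_wpM2l; [exact: ltW | rewrite /M; have := ler_norm (- K); rewrite normrN; lra].
rewrite mulrDr mulr1 mulrCA divff ?mulr1 ?lt0r_neq0 // => bonus_large.
have : 0 < e * (C + a0 * (K + M)).
  by rewrite mulr_gt0 //; have := ler_norm (- C); rewrite normrN; lra.
by rewrite /C; lra.
Qed.

Lemma free_energy_max_pos t : 0 < qm t.
Proof.
apply: free_energy_max_gt0_at.
have [s0 Ps0] : exists s0, 0 < init_marg qm s0.
  case: (pickP (fun s => 0 < init_marg qm s)) => [s0 /= Ps0|P0]; first by exists s0.
  have : \sum_s init_marg qm s <= 0 by apply: sumr_le0 => s _; rewrite leNgt P0.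
  by rewrite sum_init_marg (feasible_sum1 qm_feas) ler10.
apply: (shift_closed_all (P := fun s => 0 < init_marg qm s)) Ps0 => t' /= Pt'.
case: qm_feas => q0 q_bal _; rewrite q_bal.
by apply: lt_le_trans (free_energy_max_gt0_at Pt') _; apply: ler_term_sum.
Qed.

Lemma free_energy_max_grad_orth (v : T -> R) :
  shift_balanced v -> (forall x, last_marg v x = 0) ->
  \sum_t v t * free_energy_grad H qm t = 0.
Proof.
move=> v_bal v_last.
have [x0 _] := pos_dist_witness.
case: (@arg_minP _ R _ (snoc [ffun=> x0] x0) predT qm isT) => tm _ qm_min.
set V := \sum_t `|v t|; have V0 : 0 <= V by apply: sumr_ge0.
set e0 := qm tm / (V + 1).
have e00 : 0 < e0 by rewrite divr_gt0 ?free_energy_max_pos //; lra.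
apply: (quadratic_bound_eq0 (K := \sum_t v t ^+ 2 / qm t) e00) => e e_le.
have qe_ge0 t : 0 <= qm t + e * v t.
  have : `|e * v t| <= e0 * V by rewrite normrM ler_pM // ler_term_sum.
  rewrite ler_norml => /andP[ev_ge _].
  have small : e0 * V < qm tm.
    by rewrite /e0 mulrAC ltr_pdivrMr ?ltr_pM2l ?free_energy_max_pos //; lra.
  by have := qm_min t isT; lra.
have qe_feas : feasible (fun t => qm t + e * v t).
  case: qm_feas => _ q_bal q_last; split => //.
  - move=> s; rewrite /init_marg !big_split /= -!mulr_sumr.
    by rewrite -/(init_marg qm s) -/(init_marg v s) q_bal v_bal.
  - move=> x; rewrite /last_marg big_split /= -!mulr_sumr.
    by rewrite -/(last_marg qm x) -/(last_marg v x) q_last v_last mulr0 addr0.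
have := free_energy_perturb_ge H free_energy_max_pos
  (init_marg_pos free_energy_max_pos) qe_ge0.
by have := qm_max qe_feas; lra.
Qed.

End MaximizerProperties.

End Maximizer.

Section Potential.
Variables (R : realFieldType) (X : finType) (d : nat) (z : X).
Local Notation S := {ffun 'I_d -> X}.
Local Notation T := {ffun 'I_d.+1 -> X}.
Local Notation zw := ([ffun=> z] : S).
Implicit Types (v g : T -> R) (s : S).

(* The [k]-th transition on the path from [s] to the constant word [z...z]
   obtained by appending [z] [d] times. *)
Definition path_step s (k : nat) : T := snoc (iter k (shift z) s) z.

Definition path_flow s : T -> R := fun t => \sum_(0 <= k < d) (t == path_step s k)%:R.

Definition dot v g : R := \sum_t v t * g t.

Lemma dot_indicator t0 g : dot (fun t => (t == t0)%:R) g = g t0.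
Proof.
rewrite /dot (bigD1 t0) //= eqxx mul1r big1 ?addr0 // => t /negbTE ->.
by rewrite mul0r.
Qed.

Lemma dot_path_flow s g : dot (path_flow s) g = \sum_(0 <= k < d) g (path_step s k).
Proof.
rewrite /dot /path_flow; under eq_bigr do rewrite mulr_suml.
by rewrite exchange_big /=; apply: eq_bigr => k _; exact: dot_indicator.
Qed.

Lemma sum_dot (P : pred T) v : \sum_(t | P t) v t = dot v (fun t => (P t)%:R).
Proof.
by rewrite big_mkcond /dot; apply: eq_bigr => t _; case: (P t); rewrite ?mulr1 ?mulr0.
Qed.

Lemma dot_lin (v1 v2 v3 v4 v5 v6 : T -> R) (k : R) g :
  dot (fun t => v1 t + v2 t - v3 t - v4 t - v5 t + k * v6 t) g =
  dot v1 g + dot v2 g - dot v3 g - dot v4 g - dot v5 g + k * dot v6 g.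
Proof.
rewrite /dot (eq_bigr (fun t => v1 t * g t + v2 t * g t - v3 t * g t - v4 t * g t
  - v5 t * g t + k * (v6 t * g t))) => [|t _]; last by ring.
by rewrite big_split /= !sumrB !big_split /= -mulr_sumr.
Qed.

Lemma shift_const : shift z zw = zw.
Proof. by rewrite -[in LHS](iter_shift_const z zw) -iterS iterSr iter_shift_const. Qed.

Lemma path_telescope (f : S -> R) s :
  \sum_(0 <= k < d) f (init_t (path_step s k)) - \sum_(0 <= k < d) f (tail_t (path_step s k))
  = f s - f zw.
Proof.
rewrite -sumrB (eq_bigr (fun k => - (f (iter k.+1 (shift z) s) - f (iter k (shift z) s)))).
  by rewrite sumrN telescope_sumr // iter_shift_const /= opprB.
by move=> k _; rewrite /path_step init_snoc opprB.
Qed.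

Variable c : T -> R.
Hypothesis c_orth : forall v, shift_balanced v -> (forall x, last_marg v x = 0) ->
  \sum_t v t * c t = 0.

Definition potential s : R := \sum_(0 <= k < d) c (path_step s k).

Definition last_potential (x : X) : R :=
  c (snoc zw x) + potential (tail_t (snoc zw x)) - d%:R * c (snoc zw z).

(* Test [c_orth] on [t] + path from [x_{2:(d+1)}] - path from [x_{1:d}]: this flow
   is balanced, and the remaining terms only correct its last-letter marginal. *)
Lemma orth_potential_decomp t :
  c t = potential (init_t t) - potential (tail_t t) + last_potential (t ord_max).
Proof.
set y := t ord_max; set s2 := tail_t (snoc zw y).
set v := fun t' => (t' == t)%:R + path_flow (tail_t t) t' - path_flow (init_t t) t'
  - (t' == snoc zw y)%:R - path_flow s2 t' + d%:R * (t' == snoc zw z)%:R.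
have : dot v c = 0.
  apply: c_orth => [u|x].
    rewrite /init_marg !sum_dot !dot_lin !dot_indicator !dot_path_flow !init_snoc.
    rewrite [tail_t (snoc _ z)]shift_const.
    have := path_telescope (fun s => (s == u)%:R) (tail_t t).
    have := path_telescope (fun s => (s == u)%:R) (init_t t).
    have := path_telescope (fun s => (s == u)%:R) s2.
    by rewrite /= -/s2; lra.
  have last_path s :
      \sum_(0 <= k < d) (path_step s k ord_max == x)%:R = d%:R * (z == x)%:R :> R.
    under eq_bigr do rewrite /path_step snoc_ord_max.
    by rewrite sumr_const_nat subn0 mulr_natl.
  rewrite /last_marg sum_dot dot_lin !dot_indicator !dot_path_flow !last_path !snoc_ord_max.
  by rewrite -/y; lra.
rewrite dot_lin !dot_indicator !dot_path_flow /last_potential -/y -/s2 /potential.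
lra.
Qed.

End Potential.

Section Stationary.
Variables (R : realType) (X : finType) (d : nat).
Local Notation S := {ffun 'I_d -> X}.
Local Notation T := {ffun 'I_d.+1 -> X}.
Implicit Types (q : T -> R) (w : S -> X -> R) (p : S -> R).

Definition cond_kernel q (s : S) (y : X) : R := q (snoc s y) / init_marg q s.

Lemma cond_kernel_in_Wd q : (forall t, 0 < q t) -> (forall s, 0 < init_marg q s) ->
  in_Wd (cond_kernel q).
Proof.
move=> q_pos P_pos; split=> [s y|s]; first by rewrite divr_gt0.
by rewrite /cond_kernel -mulr_suml -big_init_eq -/(init_marg q s) divff ?lt0r_neq0.
Qed.

Lemma cond_kernel_stationary q : (forall t, 0 <= q t) -> shift_balanced q ->
  \sum_t q t = 1 -> (forall s, 0 < init_marg q s) ->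
  is_stationary (cond_kernel q) (init_marg q).
Proof.
move=> q0 q_bal q_sum P_pos; split=> [s||z]; first exact: init_marg_ge0.
  by rewrite sum_init_marg.
rewrite q_bal; apply: eq_bigr => t _.
by rewrite /cond_kernel snoc_init mulrC divfK ?gt_eqF.
Qed.

(* A nonnegative invariant measure of a positive kernel vanishing at one word
   vanishes at its predecessors, hence everywhere by [shift_closed_all]. *)
Lemma invariant_eq0 w (nu : S -> R) s0 : (forall s y, 0 < w s y) -> (forall s, 0 <= nu s) ->
  (forall u, \sum_(t | tail_t t == u) nu (init_t t) * w (init_t t) (t ord_max) = nu u) ->
  nu s0 = 0 -> forall s, nu s = 0.
Proof.
move=> w_pos nu0 nu_inv nu_s0 s; apply/eqP/negPn/negP => nu_s.
suff : nu s0 != 0 by rewrite nu_s0 eqxx.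
apply: (shift_closed_all (P := fun s => nu s != 0)) nu_s => t; apply: contra => /eqP nu_tail.
have /psumr_eq0P nu_w0 : \sum_(t' | tail_t t' == tail_t t)
    nu (init_t t') * w (init_t t') (t' ord_max) = 0 by rewrite nu_inv.
have /(_ (eqxx _))/eqP := nu_w0 (fun t' _ => mulr_ge0 (nu0 _) (ltW (w_pos _ _))) t.
by rewrite mulf_eq0 (gt_eqF (w_pos _ _)) orbF.
Qed.

Lemma stationary_unique w p P : (forall s y, 0 < w s y) -> (forall s, 0 < P s) ->
  is_stationary w p -> is_stationary w P -> forall s, p s = P s.
Proof.
move=> w_pos P_pos [p0 p_sum p_inv] [_ P_sum P_inv].
have [s0 _] : exists s0 : S, True.
  case: (pickP (@predT S)) => [s0 _|S0]; first by exists s0.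
  by move: p_sum; rewrite big_pred0 // => /eqP; rewrite eq_sym oner_eq0.
case: (@arg_minP _ R _ s0 predT (fun s => p s / P s) isT) => smin _ smin_min.
set a := p smin / P smin.
have nu0 s : 0 <= p s - a * P s.
  by rewrite subr_ge0 -ler_pdivlMr //; exact: smin_min.
have nu_inv u : \sum_(t | tail_t t == u) (p (init_t t) - a * P (init_t t)) *
    w (init_t t) (t ord_max) = p u - a * P u.
  under eq_bigr do rewrite mulrBl -mulrA.
  by rewrite sumrB -mulr_sumr P_inv p_inv.
have nu_eq0 := invariant_eq0 w_pos nu0 nu_inv (_ : p smin - a * P smin = 0).
have pE s : p s = a * P s by apply/eqP; rewrite -subr_eq0 nu_eq0 // divfK ?subrr ?gt_eqF.
have a1 : a = 1 by move: p_sum; under eq_bigr do rewrite pE; rewrite -mulr_sumr P_sum mulr1.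
by move=> s; rewrite pE a1 mul1r.
Qed.

Lemma first_marginal_init_marg (hd : (0 < d)%N) q x :
  shift_balanced q -> first_marginal hd (init_marg q) x = last_marg q x.
Proof.
move=> q_bal; rewrite -first_last_marg // /first_marginal.
rewrite -(partition_big_init (fun s : S => s (Ordinal hd) == x)).
by apply: eq_bigl => t; rewrite ffunE; congr (t _ == x); apply: val_inj.
Qed.

End Stationary.

Unset Implicit Arguments.

Theorem theorem2 (R : realType) (X : finType) (d : nat) (hd : (0 < d)%N)
  (H : {ffun 'I_d.+1 -> X} -> R) (r : X -> R) (hr : is_pos_dist r) :
  exists (kappa : {ffun 'I_d -> X} -> R) (delta : X -> R),
    let w := fun (s : {ffun 'I_d -> X}) (y : X) =>
      expR (H (snoc s y) + kappa (tail_t (snoc s y)) - kappa s - delta y) in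
    in_Wd w /\
    (exists p, is_stationary w p) /\
    (forall p, is_stationary w p -> forall x1 : X, first_marginal hd p x1 = r x1).
Proof.
have [z _] := pos_dist_witness hr.
have [qm qm_feas qm_max] := exists_free_energy_max H hr.
have qm_pos := free_energy_max_pos hr qm_feas qm_max.
have P_pos := init_marg_pos hr qm_pos.
have [_ qm_bal qm_last] := qm_feas.
set c := free_energy_grad H qm.
exists (potential z c), (last_potential z c) => w.
have -> : w = cond_kernel qm.
  apply/funext => s; apply/funext => y; rewrite /w /cond_kernel.
  have := orth_potential_decomp z (free_energy_max_grad_orth hr qm_feas qm_max) (snoc s y).
  rewrite init_snoc snoc_ord_max /c /free_energy_grad init_snoc => c_decomp.
  rewrite (_ : _ - _ = ln (qm (snoc s y)) - ln (init_marg qm s)); last by lra.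
  by rewrite expRB !lnK ?posrE.
have P_st := cond_kernel_stationary (fun t => ltW (qm_pos t)) qm_bal
  (feasible_sum1 hr qm_feas) P_pos.
split; [exact: cond_kernel_in_Wd | split; first by exists (init_marg qm)].
move=> p p_st x1; rewrite -qm_last -(first_marginal_init_marg hd _ qm_bal).
have := stationary_unique (cond_kernel_in_Wd qm_pos P_pos).1 P_pos p_st P_st.
by move=> pE; apply: eq_bigr => s _; exact: pE.
Qed.
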